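(* Let $G$ be a connected graph with $q$ edges. Then $\chi_{la}(G)=2$ if and only if $G$ is bipartite with a bipartition $(V_1,V_2)$ such that (i) $G$ has at most one pendant vertex, and (ii) $G$ admits a local antimagic labeling $f$ such that every vertex $x\in V_1$ has $f^+(x)=\binom{q+1}{2}/|V_1|$ and every vertex $y\in V_2$ has $f^+(y)=\binom{q+1}{2}/|V_2|$, these two numbers being distinct integers.
   Context: For a connected graph $G=(V,E)$ with $q=|E|$, a local antimagic labeling is a bijection $f:E\to\{1,\dots,q\}$ such that for every pair of adjacent vertices $x,y$ we have $f^+(x)\ne f^+(y)$, where $f^+(x)=\sum f(e)$ over all edges $e$ incident to $x$. The color number $c(f)$ is the number of distinct values of $f^+$, and the local antimagic chromatic number $\chi_{la}(G)$ is the minimum of $c(f)$ over all local antimagic labelings $f$ of $G$. A pendant vertex is a vertex of degree $1$. *)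

From mathcomp Require Import all_boot.
Set Implicit Arguments. Unset Strict Implicit. Unset Printing Implicit Defensive.

Definition simple_graph (T : finType) (adj : rel T) : Prop :=
  symmetric adj /\ irreflexive adj.

Definition connected_graph (T : finType) (adj : rel T) : Prop :=
  forall x y : T, connect adj x y.

Definition edges (T : finType) (adj : rel T) : {set {set T}} :=
  [set e : {set T} | [exists x, exists y, adj x y && (e == [set x; y])]].

Definition deg (T : finType) (adj : rel T) (x : T) : nat := #|[set y | adj x y]|.

Definition pendant (T : finType) (adj : rel T) (x : T) : bool := deg adj x == 1.

Definition edge_labeling (T : finType) (adj : rel T) (f : {set T} -> nat) : Prop :=
  {in edges adj &, injective f} /\
  (forall e, e \in edges adj -> 1 <= f e <= #|edges adj|) /\
  (forall k, 1 <= k <= #|edges adj| -> exists2 e, e \in edges adj & f e = k).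

Definition fplus (T : finType) (adj : rel T) (f : {set T} -> nat) (x : T) : nat :=
  \sum_(e in edges adj | x \in e) f e.

Definition local_antimagic (T : finType) (adj : rel T) (f : {set T} -> nat) : Prop :=
  edge_labeling adj f /\ (forall x y, adj x y -> fplus adj f x != fplus adj f y).

Definition color_number (T : finType) (adj : rel T) (f : {set T} -> nat) : nat :=
  size (undup [seq fplus adj f x | x : T]).

Definition chi_la_is (T : finType) (adj : rel T) (k : nat) : Prop :=
  (exists f, local_antimagic adj f /\ color_number adj f = k) /\
  (forall f, local_antimagic adj f -> k <= color_number adj f).

Definition bipartition (T : finType) (adj : rel T) (V1 : {set T}) : Prop :=
  V1 != set0 /\ ~: V1 != set0 /\
  (forall x y, adj x y -> (x \in V1) != (y \in V1)).

From mathcomp Require Import all_boot zify.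
Set Implicit Arguments. Unset Strict Implicit. Unset Printing Implicit Defensive.

(* If c(f) = 2, the two colour classes V1, V2 form a bipartition on which f^+ is
   constant, say a and b; as every edge has exactly one end in each class,
   |V1| a = |V2| b = q(q+1)/2.  Two pendant vertices would have distinct vertex
   sums, each a single label <= q, forcing a, b <= q; with |V1| + |V2| <= q + 1
   (connectivity) this gives 2|V1| = 2|V2| = q + 1, hence a = b, a contradiction.
   Conversely such a labeling has two colours, and no labeling of a graph with an
   edge has fewer. *)

Lemma bin2_cofactors_eq q n1 n2 a b :
  n1 * a = 'C(q.+1, 2) -> n2 * b = 'C(q.+1, 2) ->
  a <= q -> b <= q -> n1 + n2 <= q.+1 -> a = b.
Proof.
have bin2_double : ('C(q.+1, 2)).*2 = q.+1 * q.
  by elim: q => // n IH; rewrite binS bin1 doubleD IH; lia.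
move=> e1 e2 aq bq n12.
have [q0|q_gt0] := posnP q; first by lia.
have half_le n c : n * c = 'C(q.+1, 2) -> c <= q -> q.+1 <= n.*2.
  move=> e cq; rewrite -(leq_pmul2r q_gt0) -bin2_double -e; nia.
have h1 := half_le _ _ e1 aq; have h2 := half_le _ _ e2 bq.
have n12E : n1 = n2 by lia.
have n1_gt0 : 0 < n1 by lia.
by apply/eqP; rewrite -(eqn_pmul2l n1_gt0) e1 n12E e2.
Qed.

Lemma size_undup2P (A : eqType) (s : seq A) :
  size (undup s) = 2 <-> exists a b, a != b /\ s =i [:: a; b].
Proof.
split.
  case E: (undup s) => [|a [|b []]] // _; exists a, b.
  have : uniq [:: a; b] by rewrite -E undup_uniq.
  by rewrite /= inE andbT; split => // x; rewrite -mem_undup E.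
case=> a [b [nab sE]].
suff /perm_size -> : perm_eq (undup s) [:: a; b] by [].
apply: uniq_perm; first exact: undup_uniq; first by rewrite /= inE nab.
by move=> x; rewrite mem_undup sE.
Qed.

Section Graph.
Variables (T : finType) (adj : rel T).

Lemma edgesP e : reflect (exists x y, adj x y /\ e = [set x; y]) (e \in edges adj).
Proof.
rewrite inE; apply: (iffP existsP) => [[x /existsP [y /andP [xy /eqP ->]]]|].
  by exists x, y.
by case=> x [y [xy ->]]; exists x; apply/existsP; exists y; rewrite xy eqxx.
Qed.

Lemma mem_edges x y : adj x y -> [set x; y] \in edges adj.
Proof. by move=> xy; apply/edgesP; exists x, y. Qed.

Lemma edge_labeling_sum f : edge_labeling adj f ->
  \sum_(e in edges adj) f e = 'C(#|edges adj|.+1, 2).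
Proof.
case=> f_inj [f_range f_onto].
have labelsE : perm_eq [seq f e | e <- enum (edges adj)] (iota 1 #|edges adj|).
  apply: uniq_perm; rewrite ?iota_uniq ?map_inj_in_uniq ?enum_uniq //.
    by move=> e1 e2; rewrite !mem_enum; apply: f_inj.
  move=> k; rewrite mem_iota; apply/mapP/idP => [[e] | k_range].
    by rewrite mem_enum => /f_range; lia.
  by have [|e eE <-] := f_onto k; [lia | exists e; rewrite ?mem_enum].
rewrite -big_enum -(big_map f predT id) (perm_big _ labelsE) -bin2_sum.
by rewrite big_ltn // add0n /index_iota subSS subn0.
Qed.

Lemma card_setI_edge (A : {set T}) x y :
  (x \in A) != (y \in A) -> #|A :&: [set x; y]| = 1.
Proof.
wlog xA : x y / x \in A => [sym|].
  move=> Axy; have [xA|xA] := boolP (x \in A); first exact: sym.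
  by rewrite setUC sym 1?eq_sym //; move: Axy; rewrite (negPf xA); case: (y \in A).
rewrite xA; case: (boolP (y \in A)) => // yA _.
suff -> : A :&: [set x; y] = [set x] by rewrite cards1.
apply/setP => z; rewrite !inE.
case: (eqVneq z x) => [->|_]; first by rewrite xA.
by case: (eqVneq z y) => [->|]; rewrite ?(negPf yA) ?andbF.
Qed.

Lemma sum_fplus_side f (A : {set T}) :
  (forall x y, adj x y -> (x \in A) != (y \in A)) ->
  \sum_(x in A) fplus adj f x = \sum_(e in edges adj) f e.
Proof.
move=> A_side; rewrite /fplus (exchange_big_dep (mem (edges adj))) => [|? ? _ /andP[] //].
apply: eq_bigr => _ /edgesP [x [y [xy ->]]].
rewrite (eq_bigl (mem (A :&: [set x; y]))) => [|z]; last by rewrite mem_edges //= !inE.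
by rewrite sum_nat_const card_setI_edge ?mul1n ?A_side.
Qed.

Section Pendant.
Hypothesis adj_sym : symmetric adj.
Variable f : {set T} -> nat.

Lemma fplus_pendant x : pendant adj x ->
  exists2 z, adj x z & fplus adj f x = f [set x; z].
Proof.
move=> /cards1P [z Nx]; have Nx_adj y : adj x y = (y == z).
  by rewrite -in_set1 -Nx inE.
exists z; first by rewrite Nx_adj.
rewrite /fplus (big_pred1 [set x; z]) // => e.
apply/andP/eqP => [[/edgesP [a [b [ab ->]]]] | ->]; last first.
  by rewrite mem_edges ?Nx_adj // !inE eqxx.
rewrite !inE => /orP [] /eqP xE; rewrite -{}xE in ab *.
  by move: ab; rewrite Nx_adj => /eqP ->.
by move: ab; rewrite adj_sym Nx_adj setUC => /eqP ->.
Qed.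

Lemma pendant_fplus_le x : edge_labeling adj f -> pendant adj x ->
  fplus adj f x <= #|edges adj|.
Proof.
by case=> _ [f_range _] /fplus_pendant [z xz ->]; case/andP: (f_range _ (mem_edges xz)).
Qed.

Lemma pendant_fplus_neq u v : local_antimagic adj f ->
  pendant adj u -> pendant adj v -> u != v -> fplus adj f u != fplus adj f v.
Proof.
move=> [[f_inj _] f_anti] /fplus_pendant [zu uzu fuE] /fplus_pendant [zv vzv fvE] nuv.
apply/eqP => fuv; have edgeE : [set u; zu] = [set v; zv].
  by apply: f_inj; rewrite ?mem_edges // -fuE -fvE.
have : u \in [set v; zv] by rewrite -edgeE !inE eqxx.
rewrite !inE (negPf nuv) => /eqP uE.
by have := f_anti _ _ vzv; rewrite -uE fuv eqxx.
Qed.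
End Pendant.

Section Connected.
Variable r : T.
Hypothesis r_connect : forall v, connect adj r v.

Definition walk_of_size v k := [exists p : k.-tuple T, path adj r p && (last r p == v)].

Lemma exists_walk_of_size v : exists k, walk_of_size v k.
Proof.
have /connectP [p rp vE] := r_connect v.
by exists (size p); apply/existsP; exists (in_tuple p); rewrite /= rp vE eqxx.
Qed.

Definition dist v := ex_minn (exists_walk_of_size v).

Lemma exists_dist_parent v : v != r -> exists w, adj w v && (dist w < dist v).
Proof.
rewrite /dist; case: ex_minnP => m /existsP [[p /= /eqP <-] /andP [rp /eqP vE]] _.
case/lastP: p rp vE => [_ /= <- | p w]; first by rewrite eqxx.
rewrite size_rcons rcons_path last_rcons => /andP [rp pw] <- _.
exists (last r p); rewrite pw ltnS; case: ex_minnP => m' _; apply.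
by apply/existsP; exists (in_tuple p); rewrite /= rp eqxx.
Qed.

Lemma card_le_edges : #|T| <= #|edges adj|.+1.
Proof.
pose par v := odflt v [pick w | adj w v && (dist w < dist v)].
have parP v : v != r -> adj (par v) v && (dist (par v) < dist v).
  move=> vr; rewrite /par; case: pickP => [w //|/= none].
  by have [w] := exists_dist_parent vr; rewrite none.
pose e v := [set par v; v].
have e_inj : {in [set~ r] &, injective e}.
  move=> v v'; rewrite !inE => vr v'r evv'; apply/eqP/negPn/negP => nvv'.
  have : v \in e v' by rewrite -evv' !inE eqxx orbT.
  have : v' \in e v by rewrite evv' !inE eqxx orbT.
  rewrite !inE [v' == v]eq_sym (negPf nvv') !orbF => /eqP vE' /eqP vE.
  have /andP [_] := parP _ vr; have /andP [_] := parP _ v'r.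
  by rewrite -vE -vE' => /ltn_trans H /H; rewrite ltnn.
suff : #|T|.-1 <= #|edges adj| by lia.
rewrite -(cardsC1 r) -(card_in_imset e_inj).
apply/subset_leq_card/subsetP => ? /imsetP [v]; rewrite in_setC1 => vr ->.
have /andP [pv _] := parP _ vr.
exact: mem_edges pv.
Qed.
End Connected.

Lemma adj_of_connect x y : connect adj x y -> x != y -> exists z, adj x z.
Proof. by case/connectP => [[_ /= ->|z p /= /andP [xz _] _ _]]; [rewrite eqxx | exists z]. Qed.

Lemma card_mul_fplus_side f (A : {set T}) c : edge_labeling adj f ->
  (forall x y, adj x y -> (x \in A) != (y \in A)) ->
  {in A, forall x, fplus adj f x = c} -> #|A| * c = 'C(#|edges adj|.+1, 2).
Proof.
move=> f_lab A_side fA; rewrite -sum_nat_const -(edge_labeling_sum f_lab).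
by rewrite -(sum_fplus_side _ A_side); apply: eq_bigr => x /fA.
Qed.

Lemma color_number_ge2 f x y : local_antimagic adj f -> adj x y ->
  2 <= color_number adj f.
Proof.
move=> [_ f_anti] xy; rewrite /color_number.
have fplus_mem z : fplus adj f z \in undup [seq fplus adj f v | v : T].
  by rewrite mem_undup map_f ?mem_enum.
apply: (uniq_leq_size (s1 := [:: fplus adj f x; fplus adj f y])).
  by rewrite /= inE f_anti.
by move=> z; rewrite !inE => /orP [] /eqP ->; apply: fplus_mem.
Qed.

Lemma color_number2P f : color_number adj f = 2 <->
  exists (V1 : {set T}) a b, [/\ forall x, fplus adj f x = (if x \in V1 then a else b),
                     V1 != set0, ~: V1 != set0 & a != b].
Proof.
rewrite /color_number size_undup2P; split.
  case=> a [b [nab fplus_ab]]; exists [set x | fplus adj f x == a], a, b.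
  have [xa _ xaE] : exists2 x, x \in enum T & a = fplus adj f x.
    by apply/mapP; rewrite fplus_ab mem_head.
  have [xb _ xbE] : exists2 x, x \in enum T & b = fplus adj f x.
    by apply/mapP; rewrite fplus_ab !inE eqxx orbT.
  split=> //; last 2 first.
  - by apply/set0Pn; exists xa; rewrite inE -xaE.
  - by apply/set0Pn; exists xb; rewrite !inE -xbE eq_sym.
  move=> x; have : fplus adj f x \in [:: a; b].
    by rewrite -fplus_ab; apply: map_f; rewrite mem_enum.
  by rewrite !inE; case: eqP => // _ /eqP.
case=> V1 [a [b [fplusE /set0Pn [x1 x1V] /set0Pn [x2 x2V] nab]]].
rewrite in_setC in x2V; exists a, b; split => // c; rewrite !inE.
apply/mapP/idP => [[x _ ->] | /orP [] /eqP ->].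
- by rewrite fplusE; case: ifP; rewrite eqxx ?orbT.
- by exists x1; rewrite ?mem_enum // fplusE x1V.
- by exists x2; rewrite ?mem_enum // fplusE (negPf x2V).
Qed.

Section TwoValued.
Variables (f : {set T} -> nat) (V1 : {set T}) (a b : nat).
Hypothesis fplusE : forall x, fplus adj f x = if x \in V1 then a else b.
Hypothesis f_lam : local_antimagic adj f.

Lemma two_valued_side x y : adj x y -> (x \in V1) != (y \in V1).
Proof.
by move=> /f_lam.2; rewrite !fplusE; case: (x \in V1); case: (y \in V1); rewrite ?eqxx.
Qed.

Lemma two_valued_sideC x y : adj x y -> (x \in ~: V1) != (y \in ~: V1).
Proof. by rewrite !inE; move/two_valued_side; case: (x \in V1); case: (y \in V1). Qed.

Lemma card_mul_fplus_V1 : #|V1| * a = 'C(#|edges adj|.+1, 2).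
Proof. by apply: card_mul_fplus_side f_lam.1 two_valued_side _ => x xV; rewrite fplusE xV. Qed.

Lemma card_mul_fplus_V2 : #|~: V1| * b = 'C(#|edges adj|.+1, 2).
Proof.
by apply: card_mul_fplus_side f_lam.1 two_valued_sideC _ => x; rewrite inE fplusE => /negPf ->.
Qed.

Lemma two_valued_card_pendant : symmetric adj -> connected_graph adj ->
  #|[set x | pendant adj x]| <= 1.
Proof.
move=> adj_sym conn; rewrite leqNgt; apply/negP => /card_gt1P [u [v [pu pv nuv]]].
rewrite !inE in pu pv.
have fuv := pendant_fplus_neq adj_sym f_lam pu pv nuv.
have [aq bq] : a <= #|edges adj| /\ b <= #|edges adj|.
  move: (pendant_fplus_le adj_sym f_lam.1 pu) (pendant_fplus_le adj_sym f_lam.1 pv) fuv.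
  by rewrite !fplusE; case: (u \in V1); case: (v \in V1); rewrite ?eqxx.
have nab : a != b.
  by move: fuv; rewrite !fplusE; case: (u \in V1); case: (v \in V1); rewrite ?eqxx // eq_sym.
move/eqP: nab; apply; apply: bin2_cofactors_eq card_mul_fplus_V1 card_mul_fplus_V2 aq bq _.
by rewrite cardsC; apply: card_le_edges (conn u).
Qed.
End TwoValued.
End Graph.

Theorem mainTheorem3 (T : finType) (adj : rel T) :
  simple_graph adj -> connected_graph adj ->
  chi_la_is adj 2 <->
  exists V1 : {set T},
    bipartition adj V1 /\
    #|[set x | pendant adj x]| <= 1 /\
    let q := #|edges adj| in
    let V2 := ~: V1 in
    #|V1| %| 'C(q.+1, 2) /\ #|V2| %| 'C(q.+1, 2) /\
    'C(q.+1, 2) %/ #|V1| != 'C(q.+1, 2) %/ #|V2| /\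
    exists f, local_antimagic adj f /\
      (forall x, x \in V1 -> fplus adj f x = 'C(q.+1, 2) %/ #|V1|) /\
      (forall y, y \in V2 -> fplus adj f y = 'C(q.+1, 2) %/ #|V2|).
Proof.
move=> [adj_sym _] conn; split.
- case=> [[f [f_lam /color_number2P [V1 [a [b [fplusE V1_n0 V2_n0 nab]]]]]] _].
  have eV1 := card_mul_fplus_V1 fplusE f_lam; have eV2 := card_mul_fplus_V2 fplusE f_lam.
  have qV1 : 'C(#|edges adj|.+1, 2) %/ #|V1| = a by rewrite -eV1 mulKn ?card_gt0.
  have qV2 : 'C(#|edges adj|.+1, 2) %/ #|~: V1| = b by rewrite -eV2 mulKn ?card_gt0.
  exists V1; split; first by do 2!split => //; exact: two_valued_side f_lam.
  split; first exact: two_valued_card_pendant f_lam adj_sym conn.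
  rewrite /= qV1 qV2 -{1}eV1 -{1}eV2 !dvdn_mulr //; do 3!split => //; exists f; split => //.
  by split => x xV; rewrite fplusE ?xV //; move: xV; rewrite inE => /negPf ->.
- case=> V1 [[V1_n0 [V2_n0 _]] [_ [_ [_ [nab [f [f_lam [fV1 fV2]]]]]]]].
  split.
    exists f; split => //; apply/color_number2P; exists V1.
    exists ('C(#|edges adj|.+1, 2) %/ #|V1|), ('C(#|edges adj|.+1, 2) %/ #|~: V1|).
    split => // x; case: ifPn => [/fV1 // | xV].
    by apply: fV2; rewrite in_setC.
  have [[x1 x1V] [x2 x2V]] := (set0Pn _ V1_n0, set0Pn _ V2_n0).
  have [|z x1z] := adj_of_connect (conn x1 x2).
    by apply: contraTneq x2V => <-; rewrite inE x1V.
  by move=> g g_lam; apply: color_number_ge2 g_lam x1z.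
Qed.
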